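(* Let $P$ be a poset and $n>1$ an integer. Then for every element $a_0$ of $\mathrm{id}^n(P)$ that is not compact, there is a chain $a_0<a_1<\dots<a_{n-1}$ in $\mathrm{id}^n(P)$ where, for each $i=1,\dots,n-1$, $a_i$ is the least $i$-compact element of $\mathrm{id}^n(P)$ majorizing $a_{i-1}$ (in particular, such a least element exists).
   Context: For a poset $P$, an ideal of $P$ is an upward directed downset of $P$ (downset: $x\le y\in d\Rightarrow x\in d$; upward directed: every two elements have a common upper bound in the set). $\mathrm{id}(P)$ is the set of nonempty ideals of $P$ ordered by inclusion, and $\mathrm{id}^n$ denotes the $n$-fold iterate of this construction. An element $x$ of a poset $Q$ is compact if for every upward directed subset $D\subseteq Q$ which has a least upper bound $\bigvee D$ in $Q$ with $\bigvee D\ge x$, some $y\in D$ satisfies $y\ge x$. The $1$-compact elements of $Q$ are its compact elements; inductively, for $n\ge2$, the $n$-compact elements of $Q$ are those $(n-1)$-compact elements of $Q$ which are compact in the subposet of $(n-1)$-compact elements of $Q$. *)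

From Stdlib Require Import FunctionalExtensionality PropExtensionality ProofIrrelevance.

Record Poset := {
  car :> Type;
  le : car -> car -> Prop;
  le_refl : forall x, le x x;
  le_trans : forall x y z, le x y -> le y z -> le x z;
  le_antisym : forall x y, le x y -> le y x -> x = y
}.

Arguments le {p} _ _.

Definition lt {P : Poset} (x y : P) : Prop := le x y /\ x <> y.

Definition downset {P : Poset} (d : P -> Prop) : Prop :=
  forall x y, le x y -> d y -> d x.

Definition directed {P : Poset} (D : P -> Prop) : Prop :=
  forall x y, D x -> D y -> exists z, D z /\ le x z /\ le y z.

Definition ideal {P : Poset} (d : P -> Prop) : Prop := downset d /\ directed d.

Definition nonempty_ideal {P : Poset} (d : P -> Prop) : Prop :=
  (exists x, d x) /\ ideal d.

Definition id_car (P : Poset) : Type := { d : P -> Prop | nonempty_ideal d }.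

Definition id_le (P : Poset) (d e : id_car P) : Prop :=
  forall x, proj1_sig d x -> proj1_sig e x.

Lemma id_le_refl (P : Poset) (d : id_car P) : id_le P d d.
Proof. intros x h; exact h. Qed.

Lemma id_le_trans (P : Poset) (d e f : id_car P) :
  id_le P d e -> id_le P e f -> id_le P d f.
Proof. intros h1 h2 x h; apply h2, h1, h. Qed.

Lemma id_le_antisym (P : Poset) (d e : id_car P) :
  id_le P d e -> id_le P e d -> d = e.
Proof.
  destruct d as [d hd], e as [e he]; unfold id_le; simpl; intros h1 h2.
  assert (d = e) as <-.
  { apply functional_extensionality; intro x.
    apply propositional_extensionality; split; auto. }
  f_equal; apply proof_irrelevance.
Qed.

Definition idP (P : Poset) : Poset :=
  {| car := id_car P; le := id_le P;
     le_refl := id_le_refl P; le_trans := id_le_trans P;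
     le_antisym := id_le_antisym P |}.

Definition id_iter (n : nat) (P : Poset) : Poset := Nat.iter n idP P.

Definition is_lub_in {Q : Poset} (S : Q -> Prop) (D : Q -> Prop) (u : Q) : Prop :=
  S u /\ (forall y, D y -> le y u) /\
  (forall v, S v -> (forall y, D y -> le y v) -> le u v).

(* x is compact in the subposet S of Q (directed sets taken nonempty) *)
Definition compact_in {Q : Poset} (S : Q -> Prop) (x : Q) : Prop :=
  S x /\
  forall D : Q -> Prop,
    (forall y, D y -> S y) -> (exists y, D y) -> directed D ->
    forall u, is_lub_in S D u -> le x u -> exists y, D y /\ le x y.

Fixpoint kcompact {Q : Poset} (k : nat) : Q -> Prop :=
  match k with
  | O => fun _ => True
  | S k' => compact_in (kcompact k')
  end.

Definition compact {Q : Poset} (x : Q) : Prop := kcompact 1 x.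

Definition least {Q : Poset} (A : Q -> Prop) (x : Q) : Prop :=
  A x /\ forall y, A y -> le x y.

(* The principal-ideal map y |-> (down y) embeds Y into id(Y), and the
   (k+1)-compact elements of id(Y) are exactly the principal ideals of
   k-compact elements of Y.  For a non-compact a in id(id(Y)), the union of
   a is a non-compact element of id(Y), and the least compact element above
   a is the principal ideal of that union.  Applying the same result to the
   union one level down and pushing the resulting chain up along the
   principal-ideal embedding gives the rest of the chain, by induction on n. *)
From Stdlib Require Import Lia.

Definition order_embedding {Y Z : Poset} (f : Y -> Z) : Prop :=
  forall a b, le (f a) (f b) <-> le a b.

Lemma order_embedding_inj {Y Z : Poset} (f : Y -> Z) :
  order_embedding f -> forall a b, f a = f b -> a = b.
Proof.
  intros hf a b e; apply le_antisym; apply hf; rewrite e; apply le_refl.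
Qed.

Section CompactTransfer.
Variables (Y Z : Poset) (f : Y -> Z).
Hypothesis hf : order_embedding f.
Variables (SY : Y -> Prop) (SZ : Z -> Prop).
Hypothesis hS : forall z, SZ z <-> exists y, z = f y /\ SY y.

Definition image (D : Y -> Prop) : Z -> Prop := fun z => exists d, D d /\ z = f d.

Lemma directed_image (D : Y -> Prop) : directed D -> directed (image D).
Proof.
  intros hdir a b [da [ha ->]] [db [hb ->]].
  destruct (hdir da db ha hb) as [c [hc [l1 l2]]].
  exists (f c); split; [exists c; auto | split; apply hf; auto].
Qed.

Lemma is_lub_in_image (D : Y -> Prop) (u : Y) :
  is_lub_in SY D u -> is_lub_in SZ (image D) (f u).
Proof.
  intros [hu [hub hul]]; split; [apply hS; exists u; auto | split].
  - intros z [d [hd ->]]; apply hf; auto.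
  - intros v hv hvub; destruct (proj1 (hS v) hv) as [w [-> hw]].
    apply hf, hul; auto.
    intros d hd; apply hf, hvub; exists d; auto.
Qed.

Lemma directed_preimage (D : Z -> Prop) :
  (forall z, D z -> SZ z) -> directed D -> directed (fun y => D (f y)).
Proof.
  intros hDS hdir a b ha hb.
  destruct (hdir _ _ ha hb) as [c [hc [l1 l2]]].
  destruct (proj1 (hS c) (hDS c hc)) as [d [-> _]].
  exists d; split; [auto | split; apply hf; auto].
Qed.

Lemma is_lub_in_preimage (D : Z -> Prop) (w : Y) :
  (forall z, D z -> SZ z) -> SY w ->
  is_lub_in SZ D (f w) -> is_lub_in SY (fun y => D (f y)) w.
Proof.
  intros hDS hw [_ [hub hul]]; split; [exact hw | split].
  - intros a ha; apply hf, hub, ha.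
  - intros v hv hvub; apply hf, hul; [apply hS; exists v; auto |].
    intros z hz; destruct (proj1 (hS z) (hDS z hz)) as [d [-> _]].
    apply hf, hvub, hz.
Qed.

Lemma compact_in_image (y : Y) : compact_in SY y -> compact_in SZ (f y).
Proof.
  intros [hy hc]; split; [apply hS; exists y; auto |].
  intros D hDS [z0 hz0] hdir u hlub hyu.
  destruct (proj1 (hS u) (proj1 hlub)) as [w [-> hw]].
  assert (hDY : forall z, D z -> exists d, z = f d /\ SY d)
    by (intros z hz; apply hS, hDS, hz).
  destruct (hc (fun d => D (f d))) with (u := w) as [d [hd hle]].
  - intros d hd; destruct (hDY _ hd) as [d' [e hd']].
    apply (order_embedding_inj f hf) in e; subst; auto.
  - destruct (hDY _ hz0) as [d [-> _]]; exists d; auto.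
  - apply directed_preimage; auto.
  - apply is_lub_in_preimage; auto.
  - apply hf; auto.
  - exists (f d); split; [auto | apply hf; auto].
Qed.

Lemma compact_in_preimage (z : Z) :
  compact_in SZ z -> exists y, z = f y /\ compact_in SY y.
Proof.
  intros [hz hc]; destruct (proj1 (hS z) hz) as [y [-> hy]].
  exists y; split; [reflexivity | split; [exact hy |]].
  intros D hDS [d0 hd0] hdir u hlub hyu.
  destruct (hc (image D)) with (u := f u) as [z' [[d [hd ->]] hle]].
  - intros z' [d [hd ->]]; apply hS; exists d; auto.
  - exists (f d0), d0; auto.
  - apply directed_image, hdir.
  - apply is_lub_in_image, hlub.
  - apply hf, hyu.
  - exists d; split; [auto | apply hf, hle].
Qed.

End CompactTransfer.

Section Ideals.
Variable Y : Poset.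

Lemma ideal_nonempty (e : idP Y) : exists x, proj1_sig e x.
Proof. exact (proj1 (proj2_sig e)). Qed.

Lemma ideal_down (e : idP Y) (x y : Y) : le x y -> proj1_sig e y -> proj1_sig e x.
Proof. exact (proj1 (proj2 (proj2_sig e)) x y). Qed.

Lemma ideal_directed (e : idP Y) : directed (proj1_sig e).
Proof. exact (proj2 (proj2 (proj2_sig e))). Qed.

Lemma principal_ideal (y : Y) : nonempty_ideal (fun x : Y => le x y).
Proof.
  split; [exists y; apply le_refl | split].
  - intros a b hab hb; eapply le_trans; eauto.
  - intros a b ha hb; exists y; repeat split; auto using le_refl.
Qed.

Definition principal (y : Y) : idP Y := exist _ (fun x : Y => le x y) (principal_ideal y).

Lemma principal_le (a b : Y) : le (principal a) (principal b) <-> le a b.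
Proof.
  cbn; unfold id_le; cbn; split.
  - intro h; apply h, le_refl.
  - intros h x hx; eapply le_trans; eauto.
Qed.

Lemma principal_embedding : order_embedding principal.
Proof. exact principal_le. Qed.

Definition uset (D : idP Y -> Prop) : Y -> Prop :=
  fun x => exists e : idP Y, D e /\ proj1_sig e x.

Lemma uset_ideal (D : idP Y -> Prop) :
  (exists e, D e) -> directed D -> nonempty_ideal (uset D).
Proof.
  intros [e he] hdir; split; [| split].
  - destruct (ideal_nonempty e) as [x hx]; exists x, e; auto.
  - intros a b hab [e' [he' hb]]; exists e'; split; [auto | exact (ideal_down e' a b hab hb)].
  - intros a b [e1 [h1 ha]] [e2 [h2 hb]].
    destruct (hdir e1 e2 h1 h2) as [e3 [h3 [l1 l2]]].
    destruct (ideal_directed e3 a b (l1 a ha) (l2 b hb)) as [z [hz hab]].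
    exists z; split; [exists e3 |]; auto.
Qed.

Definition ideal_union (D : idP Y -> Prop) (hne : exists e, D e) (hdir : directed D) : idP Y :=
  exist _ (uset D) (uset_ideal D hne hdir).

Lemma le_ideal_union (D : idP Y -> Prop) (hne : exists e, D e) (hdir : directed D)
  (e : idP Y) : D e -> le e (ideal_union D hne hdir).
Proof. intros he t ht; exists e; auto. Qed.

Lemma ideal_is_lub_principal (x : idP Y) :
  is_lub_in (fun _ => True) (fun e => exists y, proj1_sig x y /\ e = principal y) x.
Proof.
  split; [exact I | split].
  - intros e [y [hy ->]] t ht; exact (ideal_down x t y ht hy).
  - intros v _ hv t ht; apply (hv (principal t)); [exists t; auto | apply le_refl].
Qed.

Lemma compact_ideal_principal (x : idP Y) :
  @compact (idP Y) x -> exists y, x = principal y.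
Proof.
  intros [_ hc].
  destruct (hc (fun e => exists y, proj1_sig x y /\ e = principal y)) with (u := x)
    as [e [[t [ht ->]] hle]].
  - intros; exact I.
  - destruct (ideal_nonempty x) as [t ht]; exists (principal t), t; auto.
  - intros a b [y1 [h1 ->]] [y2 [h2 ->]].
    destruct (ideal_directed x y1 y2 h1 h2) as [z [hz [l1 l2]]].
    exists (principal z); split; [exists z; auto | split; apply principal_le; auto].
  - apply ideal_is_lub_principal.
  - apply le_refl.
  - exists t; apply le_antisym; [exact hle |].
    intros s hs; exact (ideal_down x s t hs ht).
Qed.

(* The least upper bound of D lies below the directed union of D, which
   contains q. *)
Lemma principal_compact (q : Y) : @compact (idP Y) (principal q).
Proof.
  split; [exact I |].
  intros D _ hne hdir u [_ [hub hul]] hle.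
  assert (huW : le u (ideal_union D hne hdir))
    by (apply hul; [exact I | apply le_ideal_union]).
  destruct (huW q (hle q (le_refl _ q))) as [e [he hqe]].
  exists e; split; [exact he |].
  intros t ht; exact (ideal_down e t q ht hqe).
Qed.

Lemma kcompact_ideals (k : nat) (x : idP Y) :
  @kcompact (idP Y) (S k) x <-> exists y, x = principal y /\ @kcompact Y k y.
Proof.
  revert x; induction k as [|k IH]; intro x.
  - split.
    + intro hx; destruct (compact_ideal_principal x hx) as [y ->].
      exists y; split; [reflexivity | exact I].
    + intros [y [-> _]]; apply principal_compact.
  - split.
    + apply (compact_in_preimage _ _ principal principal_embedding _ _ IH).
    + intros [y [-> hy]]; exact (compact_in_image _ _ _ principal_embedding _ _ IH y hy).
Qed.

Lemma principal_least_kcompact (k : nat) (y y' : Y) :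
  lt y y' /\ least (fun x => kcompact k x /\ le y x) y' ->
  lt (principal y) (principal y') /\
  least (fun x => kcompact (S k) x /\ le (principal y) x) (principal y').
Proof.
  intros [[hle hne] [[hk hyy'] hleast]]; split; [split |].
  - apply principal_le, hle.
  - intro e; apply hne, (order_embedding_inj _ principal_embedding _ _ e).
  - split; [split |].
    + apply kcompact_ideals; exists y'; auto.
    + apply principal_le, hyy'.
    + intros x [hx hyx]; destruct (proj1 (kcompact_ideals k x) hx) as [z [-> hz]].
      apply principal_le, hleast; split; [exact hz | apply principal_le, hyx].
Qed.

End Ideals.

Arguments principal {Y}.

Section IdealsOfIdeals.
Variable Y : Poset.

Definition union (A : idP (idP Y)) : idP Y :=
  ideal_union Y (proj1_sig A) (ideal_nonempty _ A) (ideal_directed _ A).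

Lemma le_principal_union (A : idP (idP Y)) : le A (principal (union A)).
Proof. intros e he; apply le_ideal_union, he. Qed.

Lemma least_compact_above (A : idP (idP Y)) :
  ~ compact A ->
  lt A (principal (union A)) /\
  least (fun x => kcompact 1 x /\ le A x) (principal (union A)).
Proof.
  intros hA; split; [split |].
  - apply le_principal_union.
  - intro e; apply hA; rewrite e; apply principal_compact.
  - split; [split; [apply principal_compact | apply le_principal_union] |].
    intros x [hx hAx]; destruct (compact_ideal_principal _ x hx) as [y ->].
    apply principal_le; intros t [e [he ht]]; exact (hAx e he t ht).
Qed.

(* If the union is the principal ideal of t, the member e of A containing t
   is the largest element of A. *)
Lemma union_not_compact (A : idP (idP Y)) : ~ compact A -> ~ compact (union A).
Proof.
  intros hA hU; destruct (compact_ideal_principal _ _ hU) as [t ht].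
  assert (ht_in : proj1_sig (union A) t) by (rewrite ht; apply le_refl).
  destruct ht_in as [e [he hte]].
  assert (hUe : le (union A) e)
    by (rewrite ht; intros s hs; exact (ideal_down _ e s t hs hte)).
  apply hA; replace A with (principal e); [apply principal_compact |].
  apply le_antisym.
  - intros f hf; exact (ideal_down _ A f e hf he).
  - intros f hf; exact (le_trans _ _ _ _ (le_principal_union A f hf) hUe).
Qed.

End IdealsOfIdeals.

Lemma ideal_chain (k : nat) (X : Poset) (a0 : Nat.iter (S k) idP X) :
  ~ compact a0 ->
  exists a : nat -> Nat.iter (S k) idP X,
    a 0 = a0 /\
    forall i, 1 <= i <= k ->
      lt (a (i - 1)) (a i) /\
      least (fun x => kcompact i x /\ le (a (i - 1)) x) (a i).
Proof.
  revert X a0; induction k as [|k IH]; intros X a0 ha0.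
  - exists (fun _ => a0); split; [reflexivity | intros i hi; lia].
  - set (Y := Nat.iter k idP X) in *.
    change (car (idP (idP Y))) in a0.
    destruct (IH X (union Y a0) (union_not_compact Y a0 ha0)) as [b [hb0 hb]].
    exists (fun i => match i with 0 => a0 | S j => principal (b j) end).
    split; [reflexivity |].
    intros [|[|j]] hi; [lia | |].
    + simpl; rewrite hb0; exact (least_compact_above Y a0 ha0).
    + replace (S (S j) - 1) with (S j) by lia.
      apply (principal_least_kcompact (idP Y) (S j)).
      specialize (hb (S j) ltac:(lia)); replace (S j - 1) with j in hb by lia; exact hb.
Qed.

Theorem lemma4p1 (P : Poset) (n : nat) (hn : 1 < n)
  (a0 : id_iter n P) (ha0 : ~ compact a0) :
  exists a : nat -> id_iter n P,
    a 0 = a0 /\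
    forall i, 1 <= i <= n - 1 ->
      lt (a (i - 1)) (a i) /\
      least (fun x => kcompact i x /\ le (a (i - 1)) x) (a i).
Proof.
  destruct n as [|k]; [lia |].
  replace (S k - 1) with k by lia.
  exact (ideal_chain k P a0 ha0).
Qed.
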